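(* Let $\mathcal P=\big((\{a\}\to\{a\searrow b\})^r_{<5}\big)^{lr}$, a class of continuous maps of topological spaces. Then: (1) a continuous map between normal Hausdorff ($T_4$) spaces lies in $\mathcal P$ iff it is proper (i.e. it is closed and the preimage of every point is compact); (2) a Hausdorff space $K$ is compact iff the map $K\to\{*\}$ lies in $\mathcal P$.
   Context: For morphisms $f:A\to B$ and $g:X\to Y$ in a category, write $f\rightthreetimes g$ (''$f$ has the left lifting property with respect to $g$'') if for all morphisms $i:A\to X$, $j:B\to Y$ with $g\circ i=j\circ f$ there exists a morphism $h:B\to X$ with $h\circ f=i$ and $g\circ h=j$. For a class $C$ of morphisms, $C^l=\{f:\ f\rightthreetimes g\text{ for all }g\in C\}$, $C^r=\{g:\ f\rightthreetimes g\text{ for all }f\in C\}$, $C^{lr}=(C^l)^r$. For a class $C$ of continuous maps, $C_{<n}$ denotes the subclass of those maps whose domain and codomain are finite spaces with fewer than $n$ points. $\{a\searrow b\}$ is the Sierpiński space with open sets $\emptyset,\{a\},\{a,b\}$, and $\{a\}\to\{a\searrow b\}$ is the inclusion of the open point $a$; $\{*\}$ is the one-point space. *)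

From Stdlib Require Import List Arith Classical PropExtensionality FunctionalExtensionality.
Import ListNotations.

Record space : Type := Space {
  carrier :> Type;
  is_open : (carrier -> Prop) -> Prop;
  open_full : is_open (fun _ => True);
  open_inter : forall U V, is_open U -> is_open V -> is_open (fun x => U x /\ V x);
  open_union : forall F : (carrier -> Prop) -> Prop,
      (forall U, F U -> is_open U) -> is_open (fun x => exists U, F U /\ U x)
}.
Arguments is_open {s} _.

Definition continuous {X Y : space} (f : X -> Y) : Prop :=
  forall V : Y -> Prop, is_open V -> is_open (fun x => V (f x)).

Definition is_closed {X : space} (A : X -> Prop) : Prop :=
  is_open (fun x => ~ A x).

Definition compact_set {X : space} (A : X -> Prop) : Prop :=
  forall F : (X -> Prop) -> Prop,
    (forall U, F U -> is_open U) ->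
    (forall x, A x -> exists U, F U /\ U x) ->
    exists l : list (X -> Prop),
      (forall U, In U l -> F U) /\ (forall x, A x -> exists U, In U l /\ U x).

Definition compact (X : space) : Prop := compact_set (fun _ : X => True).

Definition hausdorff (X : space) : Prop :=
  forall x y : X, x <> y ->
    exists U V : X -> Prop, is_open U /\ is_open V /\ U x /\ V y /\
      (forall z, U z -> V z -> False).

Definition normal (X : space) : Prop :=
  forall A B : X -> Prop, is_closed A -> is_closed B -> (forall z, A z -> B z -> False) ->
    exists U V : X -> Prop, is_open U /\ is_open V /\
      (forall z, A z -> U z) /\ (forall z, B z -> V z) /\
      (forall z, U z -> V z -> False).

Definition T4 (X : space) : Prop := normal X /\ hausdorff X.

Definition closed_map {X Y : space} (f : X -> Y) : Prop :=
  forall A : X -> Prop, is_closed A -> is_closed (fun y => exists x, A x /\ f x = y).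

Definition proper {X Y : space} (f : X -> Y) : Prop :=
  closed_map f /\ forall y : Y, compact_set (fun x => f x = y).

Record mor : Type := Mor {
  dom : space;
  cod : space;
  fn : dom -> cod;
  fn_cont : continuous fn
}.

Definition lifts (f g : mor) : Prop :=
  forall (i : dom f -> dom g) (j : cod f -> cod g),
    continuous i -> continuous j ->
    (forall x, fn g (i x) = j (fn f x)) ->
    exists h : cod f -> dom g, continuous h /\
      (forall x, h (fn f x) = i x) /\ (forall y, fn g (h y) = j y).

Definition mclass := mor -> Prop.

Definition lcls (C : mclass) : mclass := fun f => forall g, C g -> lifts f g.
Definition rcls (C : mclass) : mclass := fun g => forall f, C f -> lifts f g.

Definition finite_lt (n : nat) (X : space) : Prop :=
  exists l : list X, (forall x, In x l) /\ length l < n.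

Definition lt_cls (n : nat) (C : mclass) : mclass :=
  fun f => C f /\ finite_lt n (dom f) /\ finite_lt n (cod f).

Definition pt : space.
Proof.
  refine (@Space unit (fun _ => True) I _ _); intros; exact I.
Defined.

(* Sierpinski space {a ↘ b}: carrier bool, a = true, b = false;
   open sets: empty, {a}, {a,b}. *)
Definition sierp_open (U : bool -> Prop) : Prop :=
  (forall x, ~ U x) \/ (forall x, U x <-> x = true) \/ (forall x, U x).

Lemma sierp_full : sierp_open (fun _ => True).
Proof. right; right; auto. Qed.

Lemma sierp_inter : forall U V, sierp_open U -> sierp_open V ->
  sierp_open (fun x => U x /\ V x).
Proof.
  unfold sierp_open; intros U V HU HV.
  destruct HU as [HU|[HU|HU]];
  [left; intros x [Ux _]; exact (HU x Ux)|idtac|idtac];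
  (destruct HV as [HV|[HV|HV]];
  [left; intros x [_ Vx]; exact (HV x Vx)|idtac|idtac]).
  - right; left; intro x; split; [intros [Ux _]; apply HU; exact Ux|
      intro e; split; [apply HU|apply HV]; exact e].
  - right; left; intro x; split; [intros [Ux _]; apply HU; exact Ux|
      intro e; split; [apply HU; exact e|apply HV]].
  - right; left; intro x; split; [intros [_ Vx]; apply HV; exact Vx|
      intro e; split; [apply HU|apply HV; exact e]].
  - right; right; intro x; split; [apply HU|apply HV].
Qed.

Lemma sierp_union : forall F : (bool -> Prop) -> Prop,
  (forall U, F U -> sierp_open U) -> sierp_open (fun x => exists U, F U /\ U x).
Proof.
  intros F HF; unfold sierp_open.
  destruct (classic (exists U, F U /\ U false)) as [Hb|Hb].
  - right; right; intro x; destruct Hb as [U [FU Ub]].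
    destruct (HF U FU) as [H|[H|H]].
    + exfalso; exact (H _ Ub).
    + apply H in Ub; discriminate.
    + exists U; auto.
  - destruct (classic (exists U, F U /\ U true)) as [Ha|Ha].
    + right; left; intros [|]; split; auto; intro H; try discriminate;
      exfalso; apply Hb; exact H.
    + left; intros [|] H; [apply Ha|apply Hb]; exact H.
Qed.

Definition sierp : space := @Space bool sierp_open sierp_full sierp_inter sierp_union.

Definition incl_a (_ : pt) : sierp := true.

Lemma incl_a_cont : continuous incl_a.
Proof. intros V _; exact I. Qed.

Definition mor_a : mor := Mor pt sierp incl_a incl_a_cont.

Definition I_cls : mclass := fun g => g = mor_a.

Definition Pcls : mclass := rcls (lcls (lt_cls 5 (rcls I_cls))).

Definition to_pt {K : space} (_ : K) : pt := tt.

Lemma to_pt_cont (K : space) : continuous (@to_pt K).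
Proof.
  intros V _; unfold to_pt.
  destruct (classic (V tt)) as [H|H].
  - replace (V tt) with True by (apply propositional_extensionality; tauto).
    apply open_full.
  - pose proof (open_union K (fun _ => False) (fun U F => False_ind _ F)) as E.
    replace (fun _ : K => V tt) with
      (fun x : K => exists U : K -> Prop, False /\ U x); [exact E|].
    apply functional_extensionality; intro x;
    apply propositional_extensionality; firstorder.
Qed.

From Stdlib Require Import List Classical ClassicalEpsilon PropExtensionality FunctionalExtensionality.
From mathcomp Require filter.
Import filter (Filter, ProperFilter, UltraFilter, filterT, filterI, filterS, filter_ex,
  Build_ProperFilter_ex, ultraFilterLemma, in_ultra_setVsetC).
Import ListNotations.

(* Both parts reduce to a filter characterisation of properness: every proper
   filter on X whose image under g converges to y has a cluster point in the
   fibre over y.  Maps in P have this property: extend the filter to an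
   ultrafilter u and lift against the inclusion of X into the space X + {oo}
   in which the neighbourhoods of oo are the members of u; this inclusion
   lifts against every test map with finite domain, because u concentrates on
   a single point of that domain.  Conversely, when X is regular Hausdorff, a
   proper g lifts against every f : A -> B in (P_gen)^l: f has dense image
   (lift against {b} -> {a ↘ b}) and separates disjoint closed sets up to
   closure (lift against a three-point space over {*}), so the lift of b is
   the unique cluster point, in the fibre over j b, of the i-images of the
   points a with f a near b. *)

Lemma open_ext (X : space) (U V : X -> Prop) :
  (forall x, U x <-> V x) -> is_open U -> is_open V.
Proof.
  intros H HU. replace V with U; [exact HU|].
  apply functional_extensionality; intro x; apply propositional_extensionality; apply H.
Qed.

Lemma open_empty (X : space) : is_open (fun _ : X => False).
Proof.
  eapply open_ext; [|exact (open_union X (fun _ => False) (fun U H => False_ind _ H))].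
  simpl. firstorder.
Qed.

Lemma const_continuous (Z W : space) (w : W) : continuous (fun _ : Z => w).
Proof.
  intros V _. destruct (classic (V w)) as [H|H].
  - eapply open_ext; [|apply open_full]. intro; split; auto.
  - eapply open_ext; [|apply open_empty]. intro; split; [intros []|auto].
Qed.

Lemma closed_compl (X : space) (V : X -> Prop) : is_open V -> is_closed (fun x => ~ V x).
Proof. intros H. eapply open_ext; [|exact H]. intro x; split; tauto. Qed.

Lemma closed_forall_compl (X : space) (F : (X -> Prop) -> Prop) :
  (forall V, F V -> is_open V) -> is_closed (fun z => forall V, F V -> ~ V z).
Proof.
  intros HF. eapply open_ext; [|exact (open_union X F HF)].
  intro z; split.
  - intros [V [FV Vz]] H. exact (H V FV Vz).
  - intros H. apply NNPP; intro N. apply H. intros V FV Vz. apply N; eauto.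
Qed.

Lemma open_imp_of_closed (X : space) (D : X -> Prop) (P : Prop) :
  is_closed D -> is_open (fun x => D x -> P).
Proof.
  intros HD. destruct (classic P) as [p|np].
  - eapply open_ext; [|apply open_full]. intro x; split; auto.
  - eapply open_ext; [|exact HD]. intro x; split.
    + intros Nx Dx; contradiction.
    + intros H Dx; exact (np (H Dx)).
Qed.

Definition nbhd {X : space} (x : X) (S : X -> Prop) : Prop :=
  exists U, is_open U /\ U x /\ forall z, U z -> S z.

#[local] Instance nbhd_filter {X : space} (x : X) : Filter (nbhd x).
Proof.
  constructor.
  - exists (fun _ => True). split; [apply open_full|split; [exact I|auto]].
  - intros P R [U [HU [Ux HUP]]] [V [HV [Vx HVR]]].
    exists (fun z => U z /\ V z). split; [apply open_inter; assumption|].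
    split; [split; assumption|]. intros z [Uz Vz]; split; auto.
  - intros P R HPR [U [HU [Ux HUP]]]. exists U; split; [exact HU|split; [exact Ux|auto]].
Qed.

Lemma open_of_nbhds (X : space) (V : X -> Prop) : (forall x, V x -> nbhd x V) -> is_open V.
Proof.
  intros H.
  eapply open_ext; [|exact (open_union X (fun U => is_open U /\ forall z, U z -> V z)
                                        (fun U HU => proj1 HU))].
  intro x; split.
  - intros [U [[_ HU] Ux]]; auto.
  - intros Vx. destruct (H x Vx) as [U [HU [Ux HUV]]]. exists U; auto.
Qed.

Lemma filter_forall_in {T I : Type} (G : (T -> Prop) -> Prop) {FG : Filter G}
  (l : list I) (P : I -> T -> Prop) :
  (forall m, In m l -> G (P m)) -> G (fun x => forall m, In m l -> P m x).
Proof.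
  induction l as [|m l IH]; intros Hl.
  - apply (filterS (P := fun _ => True)); [intros x _ m []|apply filterT].
  - apply (filterS (P := fun x => P m x /\ forall m', In m' l -> P m' x)).
    + intros x [Hm Hl'] m' [<-|Hin]; auto.
    + apply filterI; [apply Hl; left; reflexivity|].
      apply IH. intros m' Hm'. apply Hl; right; exact Hm'.
Qed.

Definition image {A B : Type} (f : A -> B) (C : A -> Prop) (w : B) : Prop :=
  exists a, C a /\ f a = w.

Definition in_closure {X : space} (S : X -> Prop) (x : X) : Prop :=
  forall U, is_open U -> U x -> exists z, S z /\ U z.

Definition cluster_point {X : space} (G : (X -> Prop) -> Prop) (x : X) : Prop :=
  forall S, G S -> in_closure S x.

Lemma in_closure_mono {X : space} (S T : X -> Prop) (x : X) :
  (forall z, S z -> T z) -> in_closure S x -> in_closure T x.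
Proof.
  intros HST H U HU Ux. destruct (H U HU Ux) as [z [Sz Uz]]. exists z; auto.
Qed.

Lemma in_closure_of_not_nbhd {X : space} (S : X -> Prop) (x : X) :
  ~ nbhd x (fun z => ~ S z) -> in_closure S x.
Proof.
  intros N U HU Ux. apply NNPP; intro NU. apply N.
  exists U; split; [exact HU|split; [exact Ux|]]. intros z Uz Sz. apply NU; eauto.
Qed.

Lemma closed_of_in_closure {X : space} (S : X -> Prop) :
  (forall x, in_closure S x -> S x) -> is_closed S.
Proof.
  intros H. apply open_of_nbhds. intros x Nx.
  apply NNPP; intro N. exact (Nx (H x (in_closure_of_not_nbhd S x N))).
Qed.

Lemma cluster_point_closed {X : space} (G : (X -> Prop) -> Prop) (C : X -> Prop) (x : X) :
  cluster_point G x -> G C -> is_closed C -> C x.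
Proof.
  intros Hx GC HC. apply NNPP; intro Nx.
  destruct (Hx C GC _ HC Nx) as [z [Cz Nz]]. contradiction.
Qed.

(* [trace f i C b]: the filter generated by the sets [i (C ∩ f^-1 U)], [U] a
   neighbourhood of [b]. *)
Definition trace {A B X : space} (f : A -> B) (i : A -> X) (C : A -> Prop) (b : B)
  (S : X -> Prop) : Prop :=
  nbhd b (fun w => forall a, f a = w -> C a -> S (i a)).

#[local] Instance trace_filter {A B X : space} (f : A -> B) (i : A -> X) (C : A -> Prop)
  (b : B) : Filter (trace f i C b).
Proof.
  constructor; unfold trace.
  - apply (filterS (P := fun _ => True)); [intros w _ a _ _; exact I|apply filterT].
  - intros S R HS HR. refine (filterS _ (filterI HS HR)).
    intros w [Sw Rw] a fa Ca. split; [exact (Sw a fa Ca)|exact (Rw a fa Ca)].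
  - intros S R HSR HS. refine (filterS _ HS). intros w Sw a fa Ca. exact (HSR _ (Sw a fa Ca)).
Qed.

Lemma trace_of_subset {A B X : space} (f : A -> B) (i : A -> X) (C : A -> Prop) (b : B)
  (S : X -> Prop) : (forall a, C a -> S (i a)) -> trace f i C b S.
Proof.
  intros HS. exists (fun _ => True).
  split; [apply open_full|split; [exact I|]]. intros w _ a _ Ca. exact (HS a Ca).
Qed.

Lemma trace_proper {A B X : space} (f : A -> B) (i : A -> X) (C : A -> Prop) (b : B) :
  in_closure (image f C) b -> ProperFilter (trace f i C b).
Proof.
  intros Hb. apply Build_ProperFilter_ex; [|exact (trace_filter f i C b)].
  intros S [U [HU [Ub HUS]]].
  destruct (Hb U HU Ub) as [w [[a [Ca <-]] Ua]]. exists (i a). exact (HUS _ Ua a eq_refl Ca).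
Qed.

(** * Proper maps lift clusters of filters *)

Definition cluster_lifting {X Y : space} (g : X -> Y) : Prop :=
  forall G : (X -> Prop) -> Prop, ProperFilter G ->
  forall y, (forall O, is_open O -> O y -> G (fun x => O (g x))) ->
  exists x, g x = y /\ cluster_point G x.

Lemma proper_cluster_lifting {X Y : space} (g : X -> Y) : proper g -> cluster_lifting g.
Proof.
  intros [gcl gcpt] G FG y Gy. apply NNPP; intro N.
  set (Fm := fun V : X -> Prop => is_open V /\ G (fun z => ~ V z)).
  destruct (gcpt y Fm) as [l [Hl Hcov]].
  - intros V [HV _]; exact HV.
  - intros x gx. apply NNPP; intro Nx. apply N. exists x; split; [exact gx|].
    intros S GS V HV Vx. apply NNPP; intro NS. apply Nx. exists V.
    split; [split; [exact HV|] | exact Vx].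
    refine (filterS _ GS). intros z Sz Vz. apply NS; eauto.
  - set (E := fun z => forall V, In V l -> ~ V z).
    assert (GE : G E).
    { apply (filter_forall_in G l (fun V z => ~ V z)). intros V HV; exact (proj2 (Hl V HV)). }
    assert (HgE : is_closed (image g E)).
    { apply gcl, closed_forall_compl. intros V HV; exact (proj1 (Hl V HV)). }
    assert (GO : G (fun x => ~ image g E (g x))).
    { apply (Gy (fun w => ~ image g E w)); [exact HgE|]. intros [x [Ex gx]].
      destruct (Hcov x gx) as [V [HV Vx]]. exact (Ex V HV Vx). }
    destruct (filter_ex (filterI GE GO)) as [z [Ez Nz]].
    apply Nz. exists z; split; [exact Ez|reflexivity].
Qed.

Lemma cluster_lifting_closed_map {X Y : space} (g : X -> Y) :
  cluster_lifting g -> closed_map g.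
Proof.
  intros Hg C HC. apply closed_of_in_closure. intros y Hy.
  destruct (Hg (trace g (fun x => x) C y) (trace_proper g _ C y Hy) y) as [x [gx Hx]].
  - intros O HO Oy. exists O. split; [exact HO|split; [exact Oy|]].
    intros w Ow x' <- _; exact Ow.
  - exists x; split; [|exact gx]. apply (cluster_point_closed _ C x Hx); [|exact HC].
    apply trace_of_subset. auto.
Qed.

Lemma cluster_lifting_compact_fibres {X Y : space} (g : X -> Y) :
  cluster_lifting g -> forall y, compact_set (fun x => g x = y).
Proof.
  intros Hg y Fm HFm Hcov. apply NNPP; intro N.
  set (G := fun S : X -> Prop => exists l : list (X -> Prop), (forall V, In V l -> Fm V) /\
              forall x, g x = y -> (forall V, In V l -> ~ V x) -> S x).
  assert (FG : ProperFilter G).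
  { apply Build_ProperFilter_ex.
    - intros S [l [Hl HS]]. apply NNPP; intro NS. apply N. exists l; split; [exact Hl|].
      intros x gx. apply NNPP; intro Nx. apply NS. exists x. apply HS; [exact gx|].
      intros V HV Vx. apply Nx; eauto.
    - constructor.
      + exists []. split; [intros V []|intros; exact I].
      + intros S R [l1 [H1 HS]] [l2 [H2 HR]]. exists (l1 ++ l2). split.
        * intros V HV. apply in_app_or in HV as [HV|HV]; auto.
        * intros x gx Hx. split; [apply HS|apply HR]; [exact gx| |exact gx|];
            intros V HV; apply Hx, in_or_app; auto.
      + intros S R HSR [l [Hl HS]]. exists l; split; [exact Hl|]. intros x gx Hx; auto. }
  destruct (Hg G FG y) as [x [gx Hx]].
  - intros O HO Oy. exists []. split; [intros V []|]. intros x gx _. rewrite gx; exact Oy.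
  - destruct (Hcov x gx) as [V [FV Vx]].
    assert (GV : G (fun z => ~ V z)).
    { exists [V]. split; [intros V' [<-|[]]; exact FV|]. intros z _ Hz. apply Hz; left; auto. }
    destruct (Hx _ GV V (HFm V FV) Vx) as [z [Nz Vz]]. contradiction.
Qed.

Lemma cluster_lifting_proper {X Y : space} (g : X -> Y) : cluster_lifting g -> proper g.
Proof.
  intros Hg. split; [exact (cluster_lifting_closed_map g Hg)|].
  exact (cluster_lifting_compact_fibres g Hg).
Qed.

Definition Pgen : mclass := lt_cls 5 (rcls I_cls).

Definition specializes {X : space} (x y : X) : Prop :=
  forall O, is_open O -> O y -> O x.

Lemma specializes_refl {X : space} (x : X) : specializes x x.
Proof. intros O _ Ox; exact Ox. Qed.

Lemma continuous_specializes {X Y : space} (h : X -> Y) (x y : X) :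
  continuous h -> specializes x y -> specializes (h x) (h y).
Proof. intros hc Hxy O HO Oy. exact (Hxy _ (hc O HO) Oy). Qed.

Lemma sierp_specializes : @specializes sierp true false.
Proof.
  intros O [H|[H|H]] Of.
  - destruct (H false Of).
  - apply H in Of; discriminate.
  - apply H.
Qed.

Lemma continuous_from_sierp {Z : space} (h : sierp -> Z) :
  specializes (h true) (h false) -> continuous h.
Proof.
  intros Hs O HO. simpl. unfold sierp_open.
  destruct (classic (O (h false))) as [Of|Nf].
  - right; right. intros [|]; [exact (Hs O HO Of)|exact Of].
  - destruct (classic (O (h true))) as [Ot|Nt].
    + right; left. intros [|]; split; intro H; [reflexivity|exact Ot|contradiction|discriminate].
    + left. intros [|]; assumption.
Qed.

Definition sierp_indicator {Z : Type} (U : Z -> Prop) (z : Z) : sierp :=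
  if excluded_middle_informative (U z) then true else false.

Lemma sierp_indicator_continuous {Z : space} (U : Z -> Prop) :
  is_open U -> continuous (sierp_indicator U).
Proof.
  intros HU O [H|[H|H]]; unfold sierp_indicator.
  - eapply open_ext; [|apply open_empty]. intro z; split; [intros []|apply H].
  - eapply open_ext; [|exact HU]. intro z. rewrite H.
    destruct (excluded_middle_informative (U z)); split; intro; congruence.
  - eapply open_ext; [|apply open_full]. intro z; split; [intros _; apply H|auto].
Qed.

Lemma rcls_I_cls_iff (g : mor) :
  rcls I_cls g <-> forall (m : dom g) (y : cod g),
    specializes (fn g m) y -> exists z, specializes m z /\ fn g z = y.
Proof.
  split.
  - intros Hg m y Hy.
    destruct (Hg mor_a eq_refl (fun _ => m) (fun c : sierp => if c then fn g m else y))
      as [h [hc [h1 h2]]].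
    + apply const_continuous.
    + apply continuous_from_sierp. exact Hy.
    + intros []. reflexivity.
    + exists (h false). split; [|exact (h2 false)].
      assert (Hm : h true = m) by exact (h1 tt).
      rewrite <- Hm. exact (continuous_specializes h _ _ hc sierp_specializes).
  - intros Hg f0 Hf0 i j ic jc sq. unfold I_cls in Hf0. subst f0.
    destruct (Hg (i tt) (j false)) as [z [Hz gz]].
    { rewrite (sq tt). exact (continuous_specializes j _ _ jc sierp_specializes). }
    exists (fun c : sierp => if c then i tt else z). split; [|split].
    + apply continuous_from_sierp. exact Hz.
    + intros []; reflexivity.
    + intros [|]; [exact (sq tt)|exact gz].
Qed.

Lemma rcls_I_cls_to_pt (Z : space) (h : Z -> pt) (hc : continuous h) :
  rcls I_cls (Mor Z pt h hc).
Proof.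
  apply rcls_I_cls_iff. intros m [] _. exists m.
  split; [apply specializes_refl|]. simpl. destruct (h m); reflexivity.
Qed.

Definition mor_b : mor := Mor pt sierp (fun _ => false) (const_continuous pt sierp false).

Lemma mor_b_Pgen : Pgen mor_b.
Proof.
  split; [|split].
  - apply rcls_I_cls_iff. intros [] y Hy. exists tt. split; [apply specializes_refl|].
    destruct y; [|reflexivity]. exfalso.
    assert (Ht : @is_open sierp (fun x => x = true)) by (right; left; tauto).
    discriminate (Hy _ Ht eq_refl).
  - exists [tt]; split; [intros []; simpl; auto|simpl; auto].
  - exists [true; false]; split; [intros [|]; simpl; auto|simpl; auto].
Qed.

(* The open point [None] and the two closed points [Some true], [Some false]. *)
Definition vee_open (U : option bool -> Prop) : Prop := forall c, U (Some c) -> U None.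

Lemma vee_full : vee_open (fun _ => True).
Proof. intros c _; exact I. Qed.

Lemma vee_inter : forall U V, vee_open U -> vee_open V -> vee_open (fun x => U x /\ V x).
Proof. intros U V HU HV c [Uc Vc]; split; eauto. Qed.

Lemma vee_union : forall F : (option bool -> Prop) -> Prop,
  (forall U, F U -> vee_open U) -> vee_open (fun x => exists U, F U /\ U x).
Proof. intros F HF c [U [FU Uc]]. exists U; split; [exact FU|exact (HF U FU c Uc)]. Qed.

Definition vee : space := @Space (option bool) vee_open vee_full vee_inter vee_union.

Definition vee_to_pt : mor := Mor vee pt (fun _ => tt) (const_continuous vee pt tt).

Lemma vee_to_pt_Pgen : Pgen vee_to_pt.
Proof.
  split; [apply rcls_I_cls_to_pt|split].
  - exists [None; Some true; Some false]; split; [intros [[|]|]; simpl; auto|simpl; auto].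
  - exists [tt]; split; [intros []; simpl; auto|simpl; auto].
Qed.

Definition vee_indicator {A : Type} (D1 D2 : A -> Prop) (a : A) : vee :=
  if excluded_middle_informative (D1 a) then Some true
  else if excluded_middle_informative (D2 a) then Some false else None.

Lemma vee_indicator_continuous (A : space) (D1 D2 : A -> Prop) :
  is_closed D1 -> is_closed D2 -> (forall a, D1 a -> D2 a -> False) ->
  continuous (vee_indicator D1 D2).
Proof.
  intros H1 H2 Dis O HO. destruct (classic (O None)) as [ON|NN].
  - eapply open_ext; [|exact (open_inter A _ _ (open_imp_of_closed A D1 (O (Some true)) H1)
                                              (open_imp_of_closed A D2 (O (Some false)) H2))].
    intros a. unfold vee_indicator.
    destruct (excluded_middle_informative (D1 a)) as [d1|n1];
      [|destruct (excluded_middle_informative (D2 a)) as [d2|n2]].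
    + split; [intros [Ht _]; exact (Ht d1)|].
      intro Ot; split; [auto|intro d2; destruct (Dis a d1 d2)].
    + split; [intros [_ Hf]; exact (Hf d2)|]. intro Of; split; [intro; contradiction|auto].
    + split; [intros _; exact ON|]. intros _; split; intro; contradiction.
  - eapply open_ext; [|apply open_empty]. intros a; split; [intros []|].
    intro Oa; apply NN. revert Oa. destruct (vee_indicator D1 D2 a) as [c|]; [apply HO|auto].
Qed.

(** * Left lifting against the test maps *)

Lemma lcls_Pgen_dense (m : mor) :
  lcls Pgen m -> forall b, in_closure (image (fn m) (fun _ => True)) b.
Proof.
  intros Lm b U HU Ub. apply NNPP; intro N.
  destruct (Lm mor_b mor_b_Pgen (fun _ => tt) (sierp_indicator U)) as [h [_ [_ Hh]]].
  - apply const_continuous.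
  - exact (sierp_indicator_continuous U HU).
  - intros a. simpl. unfold sierp_indicator.
    destruct (excluded_middle_informative (U (fn m a))) as [Ua|]; [|reflexivity].
    exfalso. apply N. exists (fn m a). split; [exists a; auto|exact Ua].
  - specialize (Hh b). simpl in Hh. unfold sierp_indicator in Hh.
    destruct (excluded_middle_informative (U b)); [discriminate|contradiction].
Qed.

Lemma lcls_Pgen_separates (m : mor) (D1 D2 : dom m -> Prop) (b : cod m) :
  lcls Pgen m -> is_closed D1 -> is_closed D2 -> (forall a, D1 a -> D2 a -> False) ->
  in_closure (image (fn m) D1) b -> in_closure (image (fn m) D2) b -> False.
Proof.
  intros Lm H1 H2 Dis C1 C2.
  destruct (Lm vee_to_pt vee_to_pt_Pgen (vee_indicator D1 D2) (fun _ => tt)) as [h [hc [hk _]]].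
  - exact (vee_indicator_continuous _ D1 D2 H1 H2 Dis).
  - apply const_continuous.
  - intros a; reflexivity.
  - assert (Hb : forall (D : dom m -> Prop) c, in_closure (image (fn m) D) b ->
                 (forall a, D a -> vee_indicator D1 D2 a = Some c) -> h b = Some c).
    { intros D c CD HD. apply NNPP; intro N.
      assert (HO : @is_open vee (fun w => w <> Some c)) by (intros c' _; discriminate).
      destruct (CD _ (hc _ HO) N) as [w [[a [Da <-]] Ha]].
      apply Ha. rewrite hk. exact (HD a Da). }
    assert (E1 : h b = Some true).
    { apply (Hb D1); [exact C1|]. intros a d1. unfold vee_indicator.
      destruct (excluded_middle_informative (D1 a)); [reflexivity|contradiction]. }
    assert (E2 : h b = Some false).
    { apply (Hb D2); [exact C2|]. intros a d2. unfold vee_indicator.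
      destruct (excluded_middle_informative (D1 a)) as [d1|]; [destruct (Dis a d1 d2)|].
      destruct (excluded_middle_informative (D2 a)); [reflexivity|contradiction]. }
    congruence.
Qed.

(** * Maps in P lift clusters of filters *)

Section AdjoinLimit.
Variables (A : space) (u : (A -> Prop) -> Prop).
Hypothesis u_ultra : UltraFilter u.

Definition adjoin_open (W : option A -> Prop) : Prop :=
  is_open (fun a => W (Some a)) /\ (W None -> u (fun a => W (Some a))).

Lemma adjoin_full : adjoin_open (fun _ => True).
Proof. split; [apply open_full|intros _; apply filterT]. Qed.

Lemma adjoin_inter : forall U V, adjoin_open U -> adjoin_open V ->
  adjoin_open (fun x => U x /\ V x).
Proof.
  intros U V [HU1 HU2] [HV1 HV2]; split.
  - exact (open_inter A _ _ HU1 HV1).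
  - intros [UN VN]. exact (filterI (HU2 UN) (HV2 VN)).
Qed.

Lemma adjoin_union : forall F : (option A -> Prop) -> Prop,
  (forall U, F U -> adjoin_open U) -> adjoin_open (fun x => exists U, F U /\ U x).
Proof.
  intros F HF; split.
  - eapply open_ext;
      [|apply (open_union A (fun V => exists W, F W /\ V = (fun a => W (Some a))))].
    + intro x; split.
      * intros [V [[W [FW ->]] Vx]]; eauto.
      * intros [W [FW Wx]]. exists (fun a => W (Some a)); split; eauto.
    + intros V [W [FW ->]]. exact (proj1 (HF W FW)).
  - intros [W [FW WN]]. refine (filterS _ (proj2 (HF W FW) WN)). intros x Wx; eauto.
Qed.

Definition adjoin : space := @Space (option A) adjoin_open adjoin_full adjoin_inter adjoin_union.

Lemma continuous_from_adjoin {Z : space} (h : adjoin -> Z) :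
  continuous (fun a => h (Some a)) ->
  (forall O, is_open O -> O (h None) -> u (fun a => O (h (Some a)))) -> continuous h.
Proof. intros hc hN O HO. split; [exact (hc O HO)|exact (hN O HO)]. Qed.

Lemma adjoin_in_continuous : continuous (fun a : A => (Some a : adjoin)).
Proof. intros V [H _]; exact H. Qed.

Definition mor_adjoin : mor := Mor A adjoin (fun a => Some a) adjoin_in_continuous.

Lemma ultra_finite_fibre {M : Type} (l : list M) (i : A -> M) :
  (forall m, In m l) -> exists m, u (fun a => i a = m).
Proof.
  intros Hl. apply NNPP; intro N.
  assert (Hc : u (fun a => forall m, In m l -> i a <> m)).
  { apply (filter_forall_in u l (fun m a => i a <> m)). intros m _.
    destruct (in_ultra_setVsetC (fun a => i a = m) u_ultra) as [H|H]; [exfalso; eauto|exact H]. }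
  destruct (filter_ex Hc) as [a Ha]. exact (Ha (i a) (Hl (i a)) eq_refl).
Qed.

Lemma adjoin_lcls : lcls Pgen mor_adjoin.
Proof.
  intros g [Hg [[l [Hl _]] _]] i j ic jc sq.
  destruct (ultra_finite_fibre l i Hl) as [m Hm].
  assert (Hy : specializes (fn g m) (j None)).
  { intros O HO Oj. destruct (jc O HO) as [_ HN].
    destruct (filter_ex (filterI (HN Oj) Hm)) as [a [Oa <-]].
    rewrite sq. exact Oa. }
  destruct (proj1 (rcls_I_cls_iff g) Hg m (j None) Hy) as [z [Hz gz]].
  exists (fun w : adjoin => match w with Some a => i a | None => z end). split; [|split].
  - apply continuous_from_adjoin; [exact ic|]. intros O HO Oz.
    refine (filterS _ Hm). intros a ->. exact (Hz O HO Oz).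
  - intros a; reflexivity.
  - intros [a|]; [exact (sq a)|exact gz].
Qed.

End AdjoinLimit.

Lemma Pcls_cluster_lifting {X Y : space} (g : X -> Y) (hg : continuous g) :
  Pcls (Mor X Y g hg) -> cluster_lifting g.
Proof.
  intros HP G FG y Gy.
  destruct (ultraFilterLemma FG) as [u [uU Gu]].
  destruct (HP (mor_adjoin X u uU) (adjoin_lcls X u uU) (fun x => x)
     (fun w : adjoin X u uU => match w with Some x => g x | None => y end)) as [h [hc [h1 h2]]].
  - intros V HV; exact HV.
  - apply continuous_from_adjoin; [exact hg|]. intros O HO Oy. apply Gu, Gy; assumption.
  - intros x; reflexivity.
  - exists (h None). split; [exact (h2 None)|].
    intros S GS V HV Vh. destruct (hc V HV) as [_ HN].
    destruct (filter_ex (filterI (Gu S GS) (HN Vh))) as [x [Sx Vx]].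
    exists x; split; [exact Sx|]. replace x with (h (Some x)); [exact Vx|exact (h1 x)].
Qed.

(** * Proper maps lie in P *)

Definition regular (X : space) : Prop :=
  forall (x : X) V, is_open V -> V x ->
    exists W D, is_open W /\ is_closed D /\ W x /\ (forall z, W z -> D z) /\ (forall z, D z -> V z).

Section ProperLift.
Variables (X Y : space) (g : X -> Y).
Hypotheses (X_regular : regular X) (X_hausdorff : hausdorff X) (g_proper : proper g).
Variables (A B : space) (f : A -> B) (f_cont : continuous f).
Hypothesis f_lcls : lcls Pgen (Mor A B f f_cont).
Variables (i : A -> X) (j : B -> Y).
Hypotheses (i_cont : continuous i) (j_cont : continuous j) (square : forall a, g (i a) = j (f a)).

Lemma trace_converges (C : A -> Prop) (b : B) (O : Y -> Prop) :
  is_open O -> O (j b) -> trace f i C b (fun x => O (g x)).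
Proof.
  intros HO Ob. exists (fun w => O (j w)). split; [exact (j_cont O HO)|split; [exact Ob|]].
  intros w Ow a <- _. rewrite square. exact Ow.
Qed.

Lemma trace_cluster_closure (C : A -> Prop) (b : B) (x : X) (W : X -> Prop) :
  cluster_point (trace f i C b) x -> is_open W -> W x ->
  in_closure (image f (fun a => C a /\ W (i a))) b.
Proof.
  intros Hx HW Wx U HU Ub.
  assert (HS : trace f i C b (image i (fun a => C a /\ U (f a)))).
  { exists U. split; [exact HU|split; [exact Ub|]]. intros w Uw a <- Ca. exists a; auto. }
  destruct (Hx _ HS W HW Wx) as [z [[a [[Ca Ua] <-]] Wa]].
  exists (f a). split; [exists a; auto|exact Ua].
Qed.

Lemma trace_cluster_unique (C1 C2 : A -> Prop) (b : B) (x1 x2 : X) :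
  cluster_point (trace f i C1 b) x1 -> cluster_point (trace f i C2 b) x2 -> x1 = x2.
Proof.
  intros H1 H2. apply NNPP; intro N.
  destruct (X_hausdorff x1 x2 N) as [U1 [U2 [HU1 [HU2 [U1x [U2x Dis]]]]]].
  destruct (X_regular x1 U1 HU1 U1x) as [W1 [D1 [HW1 [HD1 [W1x [WD1 DU1]]]]]].
  destruct (X_regular x2 U2 HU2 U2x) as [W2 [D2 [HW2 [HD2 [W2x [WD2 DU2]]]]]].
  apply (lcls_Pgen_separates (Mor A B f f_cont) (fun a => D1 (i a)) (fun a => D2 (i a)) b
           f_lcls (i_cont _ HD1) (i_cont _ HD2) (fun a d1 d2 => Dis _ (DU1 _ d1) (DU2 _ d2))).
  - refine (in_closure_mono _ _ _ _ (trace_cluster_closure C1 b x1 W1 H1 HW1 W1x)).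
    intros w [a [[_ Wa] fa]]. exists a; split; [exact (WD1 _ Wa)|exact fa].
  - refine (in_closure_mono _ _ _ _ (trace_cluster_closure C2 b x2 W2 H2 HW2 W2x)).
    intros w [a [[_ Wa] fa]]. exists a; split; [exact (WD2 _ Wa)|exact fa].
Qed.

Lemma cluster_over_exists (b : B) : exists x, g x = j b /\ cluster_point (trace f i (fun _ => True) b) x.
Proof.
  apply (proper_cluster_lifting g g_proper).
  - apply trace_proper. exact (lcls_Pgen_dense _ f_lcls b).
  - intros O HO Ob. exact (trace_converges _ b O HO Ob).
Qed.

Definition lift (b : B) : X := proj1_sig (constructive_indefinite_description _ (cluster_over_exists b)).

Lemma lift_spec (b : B) : g (lift b) = j b /\ cluster_point (trace f i (fun _ => True) b) (lift b).
Proof. unfold lift. destruct (constructive_indefinite_description _ (cluster_over_exists b)); auto. Qed.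

Lemma lift_comm (a : A) : lift (f a) = i a.
Proof.
  apply (trace_cluster_unique (fun _ => True) (fun _ => True) (f a)); [exact (proj2 (lift_spec (f a)))|].
  intros S [U [HU [Ua HUS]]] V HV Va. exists (i a). split; [exact (HUS _ Ua a eq_refl I)|exact Va].
Qed.

Lemma lift_nbhd (b : B) (W : X -> Prop) :
  is_open W -> W (lift b) -> nbhd b (fun w => forall a, f a = w -> W (i a)).
Proof.
  intros HW Wb. apply NNPP; intro N.
  set (C := fun a => ~ W (i a)).
  assert (HC : in_closure (image f C) b).
  { apply in_closure_of_not_nbhd. intro Hn. apply N. refine (filterS _ Hn).
    intros w Hw a fa. apply NNPP; intro Na. apply Hw. exists a; auto. }
  destruct (proper_cluster_lifting g g_proper (trace f i C b) (trace_proper f i C b HC) (j b)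
              (trace_converges C b)) as [x [_ Hx]].
  assert (Nx : ~ W x).
  { apply (cluster_point_closed _ (fun z => ~ W z) x Hx); [|exact (closed_compl X W HW)].
    apply trace_of_subset. auto. }
  apply Nx. rewrite (trace_cluster_unique _ _ b x (lift b) Hx (proj2 (lift_spec b))). exact Wb.
Qed.

Lemma lift_continuous : continuous lift.
Proof.
  intros V HV. apply open_of_nbhds. intros b Vb.
  destruct (X_regular _ V HV Vb) as [W [D [HW [HD [Wl [WD DV]]]]]].
  destruct (lift_nbhd b W HW Wl) as [U [HU [Ub HUW]]].
  exists U. split; [exact HU|split; [exact Ub|]].
  intros b' Ub'. apply DV, NNPP; intro Nb'.
  destruct (trace_cluster_closure _ b' _ _ (proj2 (lift_spec b')) HD Nb' U HU Ub')
    as [w [[a [[_ Na] <-]] Ua]].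
  exact (Na (WD _ (HUW _ Ua a eq_refl))).
Qed.

Lemma lift_square :
  exists h, continuous h /\ (forall a, h (f a) = i a) /\ (forall b, g (h b) = j b).
Proof.
  exists lift. split; [exact lift_continuous|split; [exact lift_comm|]].
  intro b. exact (proj1 (lift_spec b)).
Qed.

End ProperLift.

Lemma proper_Pcls {X Y : space} (g : X -> Y) (hg : continuous g) :
  regular X -> hausdorff X -> proper g -> Pcls (Mor X Y g hg).
Proof.
  intros reg hau gp [A B f cf] Lf i j ci cj sq.
  exact (lift_square X Y g reg hau gp A B f cf Lf i j ci cj sq).
Qed.

Lemma point_closed (X : space) : hausdorff X -> forall x : X, is_closed (fun z => z = x).
Proof.
  intros hau x. apply open_of_nbhds. intros z Nz.
  destruct (hau z x Nz) as [U [V [HU [HV [Uz [Vx Dis]]]]]].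
  exists U; split; [exact HU|split; [exact Uz|]]. intros w Uw ->. exact (Dis x Uw Vx).
Qed.

Lemma T4_regular (X : space) : T4 X -> regular X.
Proof.
  intros [nX hX] x V HV Vx.
  destruct (nX (fun z => z = x) (fun z => ~ V z) (point_closed X hX x) (closed_compl X V HV))
    as [W [O [HW [HO [H1 [H2 H3]]]]]].
  { intros z -> Nz; contradiction. }
  exists W, (fun z => ~ O z).
  split; [exact HW|split; [apply closed_compl; exact HO|split; [auto|split]]].
  - intros z Wz Oz; exact (H3 z Wz Oz).
  - intros z Nz. apply NNPP; intro Nv. exact (Nz (H2 z Nv)).
Qed.

Lemma compact_hausdorff_regular (K : space) : compact K -> hausdorff K -> regular K.
Proof.
  intros cK hK x V HV Vx.
  set (Fm := fun V' : K -> Prop => is_open V' /\ nbhd x (fun z => ~ V' z)).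
  destruct (cK (fun V' => Fm V' \/ V' = V)) as [l [Hl Hcov]].
  - intros V' [[H _]| ->]; auto.
  - intros z _. destruct (classic (V z)) as [Vz|Nz]; [exists V; auto|].
    assert (zx : z <> x) by (intros ->; contradiction).
    destruct (hK z x zx) as [U1 [U2 [HU1 [HU2 [U1z [U2x Dis]]]]]].
    exists U1. split; [left; split; [exact HU1|]|exact U1z].
    exists U2. split; [exact HU2|split; [exact U2x|]]. intros w U2w U1w; exact (Dis w U1w U2w).
  - destruct (filter_forall_in (nbhd x) l (fun V' z => Fm V' -> ~ V' z)) as [W [HW [Wx WD]]].
    { intros V' _. destruct (classic (Fm V')) as [FV|NF].
      - refine (filterS _ (proj2 FV)). intros z Nz _; exact Nz.
      - apply (filterS (P := fun _ => True)); [intros z _ FV; contradiction|apply filterT]. }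
    exists W, (fun z => forall V', In V' l /\ Fm V' -> ~ V' z).
    split; [exact HW|split; [apply closed_forall_compl; intros V' [_ [H _]]; exact H|]].
    split; [exact Wx|split].
    + intros z Wz V' [InV FV]. exact (WD z Wz V' InV FV).
    + intros z Dz. destruct (Hcov z I) as [V' [InV V'z]].
      destruct (Hl V' InV) as [FV| ->]; [destruct (Dz V' (conj InV FV) V'z)|exact V'z].
Qed.

Lemma proper_to_pt_iff (K : space) : proper (@to_pt K) <-> compact K.
Proof.
  split.
  - intros [_ Hfib] F HF Hcov. destruct (Hfib tt F HF (fun x _ => Hcov x I)) as [l [Hl Hl']].
    exists l; split; [exact Hl|]. intros x _. apply Hl'. reflexivity.
  - intros cK. split.
    + intros C _. exact I.
    + intros [] F HF Hcov. destruct (cK F HF (fun x _ => Hcov x eq_refl)) as [l [Hl Hl']].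
      exists l; split; [exact Hl|]. intros x _. exact (Hl' x I).
Qed.

Theorem claim1 :
  (forall (X Y : space) (f : X -> Y) (hf : continuous f),
      T4 X -> T4 Y -> (Pcls (Mor X Y f hf) <-> proper f))
  /\
  (forall K : space, hausdorff K ->
      (compact K <-> Pcls (Mor K pt (@to_pt K) (to_pt_cont K)))).
Proof.
  split.
  - intros X Y f hf TX _. split.
    + intro HP. exact (cluster_lifting_proper f (Pcls_cluster_lifting f hf HP)).
    + intro Hp. exact (proper_Pcls f hf (T4_regular X TX) (proj2 TX) Hp).
  - intros K hK. rewrite <- proper_to_pt_iff. split.
    + intro Hp. apply proper_Pcls; [|exact hK|exact Hp].
      apply compact_hausdorff_regular; [apply proper_to_pt_iff, Hp|exact hK].
    + intro HP. exact (cluster_lifting_proper _ (Pcls_cluster_lifting _ _ HP)).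
Qed.
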